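(* Let $\Omega$ be a thick Euclidean building and $|\Omega|$ its geometric realisation, equipped with its canonical affine structure. Then every affine functional $a:|\Omega|\to\mathbb R$ is constant.
   Context: A Euclidean building is a building (simplicial complex with a system of apartments satisfying the building axioms) whose apartments are Euclidean Coxeter complexes; it is thick if every codimension-one face lies in at least three chambers. The geometric realisation carries the affine structure obtained by pulling back the affine structure of the affine reflection group to each apartment. A map $a:|\Omega|\to\mathbb R$ is an affine functional if $a(tx+(1-t)y)=ta(x)+(1-t)a(y)$ for all $x,y\in|\Omega|$ and $t\in[0,1]$. *)

From HB Require Import structures.
From mathcomp Require Import all_boot all_order all_algebra.
From mathcomp Require Import finmap.
From mathcomp Require Import boolp classical_sets cardinality reals.

Set Implicit Arguments.
Unset Strict Implicit.
Unset Printing Implicit Defensive.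

Import Order.TTheory GRing.Theory Num.Theory.
Local Open Scope ring_scope.
Local Open Scope classical_set_scope.

Section Coxeter.
Variables (R : realType) (n : nat).
Implicit Types (x y z : 'rV[R]_n) (h : 'rV[R]_n * R) (H : set ('rV[R]_n * R)).

Definition dotv x y : R := \sum_(i < n) x ord0 i * y ord0 i.

Definition side h x : R := dotv h.1 x - h.2.
Definition hplane h : set 'rV[R]_n := [set x | side h x = 0].
Definition reflect_in h x : 'rV[R]_n := x - ((2 * side h x) / dotv h.1 h.1) *: h.1.

(* H is the set of reflecting hyperplanes of an affine (Euclidean) reflection
   group W (= the group generated by the reflections in the hyperplanes of H):
   nondegenerate, stable under the reflections, locally finite (W discrete). *)
Definition affine_reflection_arrangement H : Prop :=
  [/\ (forall h, H h -> h.1 != 0),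
      (forall h h', H h -> H h' ->
         exists h'', H h'' /\ hplane h'' = reflect_in h @` hplane h') &
      (forall x (r : R), finite_set
         (hplane @` [set h | H h /\ exists y, hplane h y /\ dotv (y - x) (y - x) <= r]))].

(* closed cell (closure of the face of the arrangement) containing x *)
Definition closedcell H x : set 'rV[R]_n :=
  [set y | forall h, H h ->
     [/\ side h x = 0 -> side h y = 0,
         0 < side h x -> 0 <= side h y &
         side h x < 0 -> side h y <= 0]].

Definition cox_vertex H z : Prop := closedcell H z = [set z].

Definition convex_hull (S : seq 'rV[R]_n) : set 'rV[R]_n :=
  [set z | exists lam : nat -> R, (forall i, 0 <= lam i) /\
     \sum_(i < size S) lam i = 1 /\ z = \sum_(i < size S) lam i *: S`_i].

Definition aff_indep (S : seq 'rV[R]_n) : Prop :=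
  forall lam : nat -> R, \sum_(i < size S) lam i = 0 ->
    \sum_(i < size S) lam i *: S`_i = 0 -> forall i, (i < size S)%N -> lam i = 0.

Definition simplicial_arrangement H : Prop :=
  forall x, exists S : seq 'rV[R]_n, [/\ uniq S, aff_indep S,
     closedcell H x = convex_hull S &
     forall z, (closedcell H x z /\ cox_vertex H z) <-> z \in S].

(* simplices of the Coxeter complex: vertex sets of faces of closed cells *)
Definition cox_simplex H (P : set 'rV[R]_n) : Prop :=
  exists x, forall z, P z -> closedcell H x z /\ cox_vertex H z.

End Coxeter.

Section Building.
Variable V : choiceType.
Local Open Scope fset_scope.
Implicit Types (K D S : set {fset V}).

Definition complex K : Prop := forall s t, K s -> fsubset t s -> K t.
Definition cvertex K (v : V) : Prop := K [fset v].

Definition cx_iso K K' (f : V -> V) : Prop :=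
  [/\ (forall v w, cvertex K v -> cvertex K w -> f v = f w -> v = w),
      (forall v', cvertex K' v' -> exists v, cvertex K v /\ f v = v') &
      (forall s : {fset V}, (forall v, v \in s -> cvertex K v) ->
         (K s <-> K' [fset f v | v in s]))].

Definition cox_iso (R : realType) (n : nat) (H : set ('rV[R]_n * R)) K
  (psi : V -> 'rV[R]_n) : Prop :=
  [/\ (forall v w, cvertex K v -> cvertex K w -> psi v = psi w -> v = w),
      (forall z, cox_vertex H z -> exists v, cvertex K v /\ psi v = z) &
      (forall s : {fset V}, (forall v, v \in s -> cvertex K v) ->
         (K s <-> cox_simplex H (psi @` [set v | v \in s])))].

Definition chamber D (C : {fset V}) : Prop :=
  D C /\ forall s, D s -> fsubset C s -> s = C.

Definition panel D (P : {fset V}) : Prop :=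
  D P /\ exists C, [/\ chamber D C, fsubset P C & #|` C| = (#|` P|).+1]%N.

Definition thick D : Prop :=
  forall P, panel D P -> exists C1 C2 C3,
    [/\ chamber D C1, chamber D C2, chamber D C3,
        fsubset P C1 /\ fsubset P C2 /\ fsubset P C3 &
        [/\ C1 != C2, C1 != C3 & C2 != C3]].

(* D is a building with apartment system A, whose apartments are Euclidean
   Coxeter complexes of the affine reflection group with hyperplanes H *)
Definition euclidean_building (R : realType) (n : nat) (H : set ('rV[R]_n * R))
  D (A : set (set {fset V})) : Prop :=
  [/\ affine_reflection_arrangement H /\ simplicial_arrangement H, complex D,
      (forall S, A S -> [/\ complex S, (forall s, S s -> D s) &
                            exists psi, cox_iso H S psi]),
      (forall s t, D s -> D t -> exists S, [/\ A S, S s & S t]) &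
      (forall S S' C, A S -> A S' -> chamber D C -> S C -> S' C ->
         exists f, cx_iso S S' f /\
                   forall v, cvertex S v -> cvertex S' v -> f v = v)].

(* geometric realisation: finitely supported barycentric weight functions
   supported on a simplex *)
Definition realpt (R : realType) D (p : V -> R) : Prop :=
  exists s, [/\ D s, (forall v, v \notin s -> p v = 0), (forall v, 0 <= p v) &
               \sum_(v <- s) p v = 1].

Definition realisation (R : realType) D := {p : V -> R | realpt D p}.

(* the point p of |S| has position z in R^n under the identification psi *)
Definition located (R : realType) (n : nat) (S : set {fset V}) (psi : V -> 'rV[R]_n)
  (p : V -> R) (z : 'rV[R]_n) : Prop :=
  exists s, [/\ S s, (forall v, v \notin s -> p v = 0) &
               z = \sum_(v <- s) p v *: psi v].

(* affine functional for the affine structure pulled back to each apartment *)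
Definition affine_functional (R : realType) (n : nat) (H : set ('rV[R]_n * R))
  D (A : set (set {fset V})) (a : realisation R D -> R) : Prop :=
  forall S psi, A S -> cox_iso H S psi ->
  forall (x y w : realisation R D) (zx zy : 'rV[R]_n) (t : R),
    (0 <= t <= 1)%R ->
    located S psi (sval x) zx -> located S psi (sval y) zy ->
    located S psi (sval w) (t *: zx + (1 - t) *: zy)%R ->
    a w = (t * a x + (1 - t) * a y)%R.

Arguments located [R n] S psi p z.
End Building.

From HB Require Import structures.
From mathcomp Require Import all_boot all_order all_algebra.
From mathcomp Require Import finmap.
From mathcomp Require Import boolp classical_sets cardinality reals.
From mathcomp Require Import ring lra.

(* Restricted to an apartment, an affine functional a is an affine function z |-> c + <g, z>
   of the position z in R^n. Let p be a vertex of a chamber C, h the wall of C opposite p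
   and C' the mirror image of C in h. By thickness the panel C \ {p} lies in a third
   chamber E. An isomorphism fixing C from an apartment containing C and E onto the given
   one maps E to C' (it cannot map it to C), so a takes at the vertex of E off the panel
   the value it takes at the mirror image of p; the same argument with C' in place of C
   shows that this is also the value at p. Hence g is orthogonal to every wall of C, and
   these walls determine a point by its sides, so g = 0. *)

Set Implicit Arguments.
Unset Strict Implicit.
Unset Printing Implicit Defensive.

Import Order.TTheory GRing.Theory Num.Theory.
Local Open Scope ring_scope.
Local Open Scope classical_set_scope.

Section SmallRatio.
Variable R : realType.

Lemma exists_small_ratio (T : eqType) (s : seq T) (f g : T -> R) :
  exists2 e : R, 0 < e & forall c, c \in s -> g c != 0 -> e * `|f c| < `|g c|.
Proof.
elim: s => [|c s [e e0 He]]; first by exists 1.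
pose ec := if g c == 0 then 1 else `|g c| / (`|f c| + 1).
have ec0 : 0 < ec.
  by rewrite /ec; case: eqP => // /eqP gc; rewrite divr_gt0 ?normr_gt0 ?ltr_wpDl.
have Hec : g c != 0 -> ec * `|f c| < `|g c|.
  move=> gc; rewrite /ec (negbTE gc) mulrAC ltr_pdivrMr ?ltr_wpDl //.
  by rewrite mulrDr mulr1 ltrDl normr_gt0.
exists (Num.min e ec); first by rewrite lt_min e0 ec0.
move=> c'; rewrite in_cons => /orP [/eqP -> gc|c's gc'].
  by apply: le_lt_trans (Hec gc); rewrite ler_wpM2r // ge_min lexx orbT.
by apply: le_lt_trans (He c' c's gc'); rewrite ler_wpM2r // ge_min lexx.
Qed.

Lemma addr_neq0_norm_lt (x y : R) : `|y| < `|x| -> x + y != 0.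
Proof. by apply: contraTneq => /eqP; rewrite addr_eq0 => /eqP ->; rewrite normrN ltxx. Qed.

End SmallRatio.

Section InnerProduct.
Variables (R : realType) (n : nat).
Implicit Types (x y z : 'rV[R]_n).

Lemma dotvC x y : dotv x y = dotv y x.
Proof. by apply: eq_bigr => i _; rewrite mulrC. Qed.

Lemma dotvDl x y z : dotv (x + y) z = dotv x z + dotv y z.
Proof. by rewrite /dotv -big_split; apply: eq_bigr => i _; rewrite !mxE mulrDl. Qed.

Lemma dotvZl (c : R) x y : dotv (c *: x) y = c * dotv x y.
Proof. by rewrite /dotv mulr_sumr; apply: eq_bigr => i _; rewrite !mxE mulrA. Qed.

Lemma dotvNl x y : dotv (- x) y = - dotv x y.
Proof. by rewrite -scaleN1r dotvZl mulN1r. Qed.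

Lemma dotvBl x y z : dotv (x - y) z = dotv x z - dotv y z.
Proof. by rewrite dotvDl dotvNl. Qed.

Lemma dotv0l y : dotv 0 y = 0.
Proof. by rewrite -(scale0r 0) dotvZl mul0r. Qed.

Lemma dotvDr x y z : dotv z (x + y) = dotv z x + dotv z y.
Proof. by rewrite !(dotvC z) dotvDl. Qed.

Lemma dotvZr (c : R) x y : dotv y (c *: x) = c * dotv y x.
Proof. by rewrite !(dotvC y) dotvZl. Qed.

Lemma dotvBr x y z : dotv z (x - y) = dotv z x - dotv z y.
Proof. by rewrite !(dotvC z) dotvBl. Qed.

Lemma dotv_sumr (I : Type) (r : seq I) (P : pred I) (F : I -> 'rV[R]_n) y :
  dotv y (\sum_(i <- r | P i) F i) = \sum_(i <- r | P i) dotv y (F i).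
Proof.
elim/big_rec2: _ => [|i a b _ <-]; last by rewrite dotvDr.
by rewrite dotvC dotv0l.
Qed.

Lemma dotvv_ge0 x : 0 <= dotv x x.
Proof. by apply: sumr_ge0 => i _; rewrite -expr2 sqr_ge0. Qed.

Lemma dotvv_eq0 x : (dotv x x == 0) = (x == 0).
Proof.
apply/idP/eqP => [|->]; last by rewrite dotv0l.
rewrite psumr_eq0 => [/allP x0|i _]; last by rewrite -expr2 sqr_ge0.
apply/rowP => i; rewrite mxE.
by have /= := x0 i (mem_index_enum i); rewrite -expr2 sqrf_eq0 => /eqP.
Qed.

Lemma exists_nonorthogonal_dir (T : eqType) (s : seq T) (b : T -> 'rV[R]_n) :
  (forall c, c \in s -> b c != 0) -> exists u, forall c, c \in s -> dotv (b c) u != 0.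
Proof.
elim: s => [|c s IH] bs0; first by exists 0.
have [u Hu] := IH (fun c' cs => bs0 c' (mem_behead (s := c :: s) cs)).
have [cu|cu] := eqVneq (dotv (b c) u) 0; last first.
  by exists u => c'; rewrite in_cons => /orP [/eqP ->|/Hu].
have [e e0 He] := exists_small_ratio s (fun c' => dotv (b c') (b c))
                                       (fun c' => dotv (b c') u).
exists (u + e *: b c) => c'; rewrite in_cons dotvDr dotvZr => /orP [/eqP ->|c's].
  by rewrite cu add0r mulf_neq0 ?dotvv_eq0 ?bs0 ?mem_head // gt_eqF.
by apply: addr_neq0_norm_lt; rewrite normrM gtr0_norm // He ?Hu.
Qed.

End InnerProduct.

Section Reflection.
Variables (R : realType) (n : nat).
Implicit Types (x u : 'rV[R]_n) (h : 'rV[R]_n * R).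

Lemma side_barycenter h k (lam : nat -> R) (p : nat -> 'rV[R]_n) :
  \sum_(i < k) lam i = 1 ->
  side h (\sum_(i < k) lam i *: p i) = \sum_(i < k) lam i * side h (p i).
Proof.
move=> lam1; rewrite /side dotv_sumr.
under [RHS]eq_bigr => i _ do rewrite mulrBr.
rewrite sumrB -mulr_suml lam1 mul1r; congr (_ - _).
by apply: eq_bigr => i _; rewrite dotvZr.
Qed.

Lemma side_line h x u (t : R) : side h (x + t *: u) = side h x + t * dotv h.1 u.
Proof. by rewrite /side dotvDr dotvZr; ring. Qed.

Lemma side_segment h x y (t : R) :
  side h (x + t *: (y - x)) = side h x + t * (side h y - side h x).
Proof. by rewrite side_line /side dotvBr; ring. Qed.

Lemma side_reflect_in h x : h.1 != 0 -> side h (reflect_in h x) = - side h x.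
Proof.
rewrite -dotvv_eq0 => h0; rewrite /reflect_in /side dotvBr dotvZr.
by field.
Qed.

Lemma reflect_inK h : h.1 != 0 -> involutive (reflect_in h).
Proof.
move=> h0 x; rewrite {1}/reflect_in side_reflect_in //.
by rewrite mulrN mulNr scaleNr opprK /reflect_in subrK.
Qed.

Lemma reflect_in_id h x : side h x = 0 -> reflect_in h x = x.
Proof. by move=> hx; rewrite /reflect_in hx mulr0 mul0r scale0r subr0. Qed.

Lemma side_reflect_inE h h' x :
  side h' (reflect_in h x) =
  dotv (h'.1 - (2 * dotv h'.1 h.1 / dotv h.1 h.1) *: h.1) x
   - (h'.2 - (2 * dotv h'.1 h.1 / dotv h.1 h.1) * h.2).
Proof. by rewrite /reflect_in /side dotvBr dotvZr dotvBl dotvZl; ring. Qed.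

Lemma side_proportional h h' : h.1 != 0 ->
  (forall x, side h x = 0 <-> side h' x = 0) ->
  exists2 mu : R, mu != 0 & forall x, side h' x = mu * side h x.
Proof.
move=> h0 hh'; have hh0 : dotv h.1 h.1 != 0 by rewrite dotvv_eq0.
pose x0 := (h.2 / dotv h.1 h.1) *: h.1.
have hx0 : side h x0 = 0 by rewrite /side dotvZr; field.
have h'x0 : side h' x0 = 0 by apply/hh'.
have ker v : dotv h.1 v = 0 -> dotv h'.1 v = 0.
  move=> hv; have /hh' : side h (x0 + 1 *: v) = 0 by rewrite side_line hx0 hv mulr0 addr0.
  by rewrite side_line h'x0 add0r mul1r.
pose mu := dotv h'.1 h.1 / dotv h.1 h.1.
have hw : dotv h.1 (h'.1 - mu *: h.1) = 0.
  by rewrite dotvBr dotvZr /mu (dotvC h.1); field.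
have h'1 : h'.1 = mu *: h.1.
  apply/eqP; rewrite -subr_eq0 -dotvv_eq0.
  by rewrite {1}dotvBl dotvZl hw ker // mulr0 subr0.
have h'2 : h'.2 = mu * h.2.
  move: h'x0 hx0; rewrite /side h'1 dotvZl => /eqP; rewrite subr_eq0 => /eqP <- /eqP.
  by rewrite subr_eq0 => /eqP ->.
have side' x : side h' x = mu * side h x by rewrite /side h'1 h'2 dotvZl mulrBr.
exists mu => //; apply: contra hh0 => /eqP mu0.
have /hh' : side h' (x0 + 1 *: h.1) = 0 by rewrite side' mu0 mul0r.
by rewrite side_line hx0 add0r mul1r => ->.
Qed.
End Reflection.

Section LocallyFinite.
Variables (R : realType) (n : nat) (H : set ('rV[R]_n * R)).
Hypothesis HA : affine_reflection_arrangement H.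
Implicit Types (x y z u : 'rV[R]_n) (h : 'rV[R]_n * R).

Lemma wall_normal_neq0 h : H h -> h.1 != 0.
Proof. by case: HA => nz _ _; apply: nz. Qed.

Lemma seq_representatives (T U : eqType) (P : T -> Prop) (f : T -> U) (s : seq U) :
  (forall W, W \in s -> exists t, P t /\ f t = W) ->
  exists2 L : seq T, (forall t, t \in L -> P t) &
     forall W, W \in s -> exists2 t, t \in L & f t = W.
Proof.
elim: s => [|W s IH] Hs; first by exists [::].
have [L PL fL] := IH (fun W' W's => Hs W' (mem_behead (s := W :: s) W's)).
have [t [Pt <-]] := Hs W (mem_head _ _).
exists (t :: L) => [t'|W']; rewrite in_cons => /orP [/eqP ->|] //; first exact: PL.
  by exists t; rewrite ?mem_head.
by case/fL => t' t'L <-; exists t' => //; rewrite in_cons t'L orbT.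
Qed.

Lemma local_walls x : exists2 L : seq ('rV[R]_n * R), (forall h, h \in L -> H h) &
  forall h, H h -> forall y, hplane h y -> dotv (y - x) (y - x) <= 1 ->
     exists2 h', h' \in L & hplane h' = hplane h.
Proof.
case: HA => _ _ /(_ x 1) /finite_seqP [s Hs].
have Hrep W : W \in s -> exists h, H h /\ hplane h = W.
  by move=> Ws; have : [set` s] W by []; rewrite -Hs => -[h [Hh _] <-]; exists h.
have [L HL Ls] := seq_representatives Hrep.
exists L => // h Hh y hy yx; apply: Ls.
by have : [set` s] (hplane h) by rewrite -Hs; exists h => //; split => //; exists y.
Qed.

Lemma wall_hit_margin x u : exists2 e : R, 0 < e & forall h, H h -> side h x != 0 ->
  forall s, 0 <= s -> s * s * dotv u u <= 1 -> side h (x + s *: u) = 0 -> e < s.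
Proof.
have [L HL Ls] := local_walls x.
have [e e0 He] := exists_small_ratio L (fun b => dotv b.1 u) (fun b => side b x).
exists e => // h Hh hx s s0 su hs.
have [h' h'L eqh] : exists2 h', h' \in L & hplane h' = hplane h.
  by apply: (Ls h Hh (x + s *: u)) => //; rewrite addrC addKr dotvZl dotvZr mulrA.
have onh' y : (side h' y = 0) = (side h y = 0) := congr1 (fun P => P y) eqh.
have h'x : side h' x != 0 by apply/eqP; rewrite onh'; apply/eqP.
move: hs; rewrite -onh' side_line => /eqP; rewrite addr_eq0 => /eqP h'xE.
have d0 : dotv h'.1 u != 0 by apply: contraNneq h'x => d0; rewrite h'xE d0 mulr0 oppr0.
move/(_ h' h'L h'x): He; rewrite h'xE normrN normrM (ger0_norm s0).
by rewrite ltr_pM2r ?normr_gt0.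
Qed.

Lemma segment_keeps_sides x u : exists t : R, [/\ 0 < t, t <= 1, t * t * dotv u u <= 1 &
  forall h, H h -> side h x != 0 ->
  forall s, 0 <= s <= t -> 0 < side h x * side h (x + s *: u)].
Proof.
have [e e0 He] := wall_hit_margin x u.
have uu0 := dotvv_ge0 u.
pose t := Num.min e (1 + dotv u u)^-1.
have t0 : 0 < t by rewrite lt_min e0 invr_gt0 ltr_wpDr.
have te : t <= e by rewrite ge_min lexx.
have tu : t * (1 + dotv u u) <= 1.
  by rewrite -ler_pdivlMr ?ltr_wpDr // div1r ge_min lexx orbT.
have small s : 0 <= s <= t -> s * s * dotv u u <= 1.
  by case/andP => s0 st; nra.
exists t; split => //; first by nra.
  by apply: small; rewrite lexx ltW.
move=> h Hh hx s /andP [s0 st]; rewrite side_line ltNge; apply/negP => neg.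
(* otherwise the wall is crossed at s1 = -a/b <= s, against the margin e *)
set a := side h x in hx neg *; set b := dotv h.1 u in neg.
have a2 : 0 < a * a by rewrite lt_def mulf_neq0 // -expr2 sqr_ge0.
have ab : a * b < 0 by nra.
have b0 : b != 0 by apply: contraTneq ab => ->; rewrite mulr0 ltxx.
pose s1 := - a / b.
have s1b : s1 * b = - a by rewrite /s1 divfK.
have s10 : 0 < s1 by nra.
have s1s : s1 <= s by nra.
have s1t : 0 <= s1 <= t by rewrite ltW //= (le_trans s1s).
have : e < s1.
  by apply: (He h Hh hx s1 (ltW s10) (small s1 s1t)); rewrite side_line s1b addrN.
by rewrite ltNge (le_trans s1s) // (le_trans st).
Qed.

Definition generic y := forall h, H h -> side h y != 0.

Lemma exists_generic_cell x : exists2 y, generic y & closedcell H x `<=` closedcell H y.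
Proof.
have [L HL Ls] := local_walls x.
have [u Hu] := exists_nonorthogonal_dir (fun h hL => wall_normal_neq0 (HL h hL)).
have [t [t0 _ tu keep]] := segment_keeps_sides x u.
have tt : 0 <= t <= t by rewrite lexx ltW.
exists (x + t *: u).
  move=> h Hh; apply/eqP => hy.
  have [h' h'L eqh] : exists2 h', h' \in L & hplane h' = hplane h.
    by apply: (Ls h Hh (x + t *: u)) => //; rewrite addrC addKr dotvZl dotvZr mulrA.
  have h'y : side h' (x + t *: u) = 0 by have : hplane h (x + t *: u) by []; rewrite -eqh.
  have [h'x|h'x] := eqVneq (side h' x) 0.
    move: h'y; rewrite side_line h'x add0r => /eqP.
    by rewrite mulf_eq0 gt_eqF //= (negbTE (Hu _ h'L)).
  by have := keep h' (HL _ h'L) h'x t tt; rewrite h'y mulr0 ltxx.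
move=> z xz h Hh; have [z0 zp zn] := xz h Hh.
have [hx|hx] := eqVneq (side h x) 0.
  by have hz := z0 hx; split => _; rewrite hz.
have hxy := keep h Hh hx t tt.
split => hy; first by move: hxy; rewrite hy mulr0 ltxx.
  by apply: zp; nra.
by apply: zn; nra.
Qed.

End LocallyFinite.

Section AffineDimension.
Variables (R : realType) (n : nat).

Definition diffmx k (p : nat -> 'rV[R]_n) : 'M[R]_(k, n) :=
  \matrix_(i < k, j < n) (p i.+1 - p 0%N) 0 j.

Lemma diffmx_mul k p (v : 'rV[R]_k) :
  v *m diffmx k p = \sum_(i < k) v 0 i *: (p i.+1 - p 0%N).
Proof.
rewrite mulmx_sum_row; apply: eq_bigr => i _; congr (_ *: _).
by apply/rowP => j; rewrite !mxE.
Qed.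

Lemma row_free_diffmx k (p : nat -> 'rV[R]_n) :
  (forall lam : nat -> R, \sum_(i < k.+1) lam i = 0 ->
     \sum_(i < k.+1) lam i *: p i = 0 -> forall i, (i < k.+1)%N -> lam i = 0) ->
  row_free (diffmx k p).
Proof.
move=> indep; apply: inj_row_free => v v0.
pose lam j := if j is j'.+1 then oapp (v 0) 0 (insub j') else - \sum_(i < k) v 0 i.
have lamE (i : 'I_k) : lam (bump 0 i) = v 0 i by rewrite /bump /= valK.
have lam_sum : \sum_(i < k.+1) lam i = 0.
  by rewrite big_ord_recl; under eq_bigr => i _ do rewrite lamE; rewrite addNr.
have lam_comb : \sum_(i < k.+1) lam i *: p i = 0.
  apply: etrans v0; rewrite diffmx_mul big_ord_recl.
  under eq_bigr => i _ do rewrite lamE.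
  under [RHS]eq_bigr => i _ do rewrite scalerBr.
  by rewrite sumrB /= scaleNr -scaler_suml addrC.
apply/rowP => i; rewrite mxE -lamE; apply: indep => //.
by rewrite /bump /= ltnS ltn_ord.
Qed.

Lemma row_full_diffmx k (p : nat -> 'rV[R]_n) :
  (forall z, exists lam : nat -> R,
     \sum_(i < k.+1) lam i = 1 /\ z = \sum_(i < k.+1) lam i *: p i) ->
  row_full (diffmx k p).
Proof.
move=> span; rewrite -sub1mx; apply/row_subP => j; apply/submxP.
have [lam [lam1 pj]] := span (p 0%N + row j 1%:M).
exists (\row_(i < k) lam i.+1).
rewrite -[row j _](addKr (p 0%N)) pj diffmx_mul big_ord_recl.
under [RHS]eq_bigr => i _ do rewrite mxE scalerBr.
have lam1' : \sum_(i < k) lam i.+1 = 1 - lam 0%N.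
  by rewrite -lam1 big_ord_recl addrC addKr.
rewrite sumrB -scaler_suml lam1' scalerBl scale1r /=.
by rewrite opprB addrA addrC [- _ + _]addrC.
Qed.

Lemma aff_indep_size (L : seq 'rV[R]_n) : aff_indep L -> (size L <= n.+1)%N.
Proof.
case E: (size L) => [//|k] indep; rewrite ltnS.
have /eqP <- : row_free (diffmx k (nth 0 L)).
  by apply: row_free_diffmx => lam; rewrite -E; apply: indep.
exact: rank_leq_col.
Qed.

Lemma affine_span_size (L : seq 'rV[R]_n) :
  (forall z, exists lam : nat -> R,
     \sum_(i < size L) lam i = 1 /\ z = \sum_(i < size L) lam i *: L`_i) ->
  (n.+1 <= size L)%N.
Proof.
case E: (size L) => [|k] span.
  by have [lam [+ _]] := span 0; rewrite big_ord0 => /eqP; rewrite eq_sym oner_eq0.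
rewrite ltnS; have /eqP <- : row_full (diffmx k (nth 0 L)).
  exact: row_full_diffmx.
exact: rank_leq_row.
Qed.

End AffineDimension.

Section ClosedCells.
Variables (R : realType) (n : nat) (H : set ('rV[R]_n * R)).
Hypothesis HA : affine_reflection_arrangement H.
Implicit Types (x y z p q : 'rV[R]_n) (h : 'rV[R]_n * R).

Lemma closedcellP x z : closedcell H x z <->
  forall h, H h -> (side h x = 0 -> side h z = 0) /\ 0 <= side h x * side h z.
Proof.
split=> xz h Hh; have := xz h Hh.
  case=> z0 zp zn; split => //.
  have [hx|hx|->] := ltgtP (side h x) 0; last by rewrite mul0r.
    by have := zn hx; nra.
  by have := zp hx; nra.
by case=> z0 xz0; split => // hx; nra.
Qed.

Lemma closedcell_refl x : closedcell H x x.
Proof. by apply/closedcellP => h _; split => //; rewrite -expr2 sqr_ge0. Qed.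

Lemma closedcell_side_gt0 x z h : H h -> closedcell H x z ->
  side h x != 0 -> side h z != 0 -> 0 < side h x * side h z.
Proof.
by move=> Hh /closedcellP /(_ h Hh) [_ xz] hx hz; rewrite lt_def mulf_neq0.
Qed.

Lemma closedcell_eq_sides x z : generic H x ->
  (forall h, H h -> 0 < side h x * side h z) -> closedcell H z = closedcell H x.
Proof.
move=> Gx xz; apply/funext => w; apply/propext; rewrite !closedcellP.
split => cw h Hh; have [_ w0] := cw h Hh; have xz0 := xz h Hh; split.
- by move=> hx; move: xz0; rewrite hx mul0r ltxx.
- nra.
- by move=> hz; move: xz0; rewrite hz mulr0 ltxx.
- nra.
Qed.

Lemma closedcell_convex x k (lam : nat -> R) (pt : nat -> 'rV[R]_n) :
  (forall i, (i < k)%N -> 0 <= lam i) -> \sum_(i < k) lam i = 1 ->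
  (forall i, (i < k)%N -> closedcell H x (pt i)) ->
  closedcell H x (\sum_(i < k) lam i *: pt i).
Proof.
move=> lam0 lam1 xpt; apply/closedcellP => h Hh; rewrite side_barycenter //.
split => [hx|].
  apply: big1 => i _; have /closedcellP/(_ h Hh) [/(_ hx) -> _] := xpt i (ltn_ord i).
  by rewrite mulr0.
rewrite mulr_sumr; apply: sumr_ge0 => i _.
have /closedcellP/(_ h Hh) [_ xi] := xpt i (ltn_ord i).
by rewrite mulrCA mulr_ge0 ?lam0.
Qed.

Lemma closedcell_segment x p q (t : R) : 0 <= t <= 1 ->
  closedcell H x p -> closedcell H x q -> closedcell H x (p + t *: (q - p)).
Proof.
move=> /andP [t0 t1] /closedcellP xp /closedcellP xq; apply/closedcellP => h Hh.
have [p0 xp0] := xp h Hh; have [q0 xq0] := xq h Hh.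
rewrite side_segment; split => [hx|]; first by rewrite p0 // q0 // subrr mulr0 addr0.
nra.
Qed.

Lemma closedcell_toward y z : generic H y ->
  exists2 t : R, 0 < t & closedcell H y (y + t *: (z - y)).
Proof.
move=> Gy; have [t [t0 _ _ keep]] := segment_keeps_sides HA y (z - y).
exists t => //; apply/closedcellP => h Hh.
have := keep h Hh (Gy h Hh) t; rewrite lexx ltW // => /(_ isT) yz.
by split; [move=> hy; move: yz; rewrite hy mul0r ltxx | exact: ltW].
Qed.

End ClosedCells.

Section Chambers.
Variables (R : realType) (n : nat) (H : set ('rV[R]_n * R)).
Hypothesis HA : affine_reflection_arrangement H.
Hypothesis HS : simplicial_arrangement H.
Implicit Types (x y z p q : 'rV[R]_n) (h : 'rV[R]_n * R).

Definition cell_verts y : seq 'rV[R]_n := projT1 (cid (HS y)).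

Lemma cell_vertsP y : [/\ uniq (cell_verts y), aff_indep (cell_verts y),
     closedcell H y = convex_hull (cell_verts y) &
     forall z, (closedcell H y z /\ cox_vertex H z) <-> z \in cell_verts y].
Proof. exact: (projT2 (cid (HS y))). Qed.

Lemma cell_verts_uniq y : uniq (cell_verts y).
Proof. by case: (cell_vertsP y). Qed.

Lemma cell_verts_indep y : aff_indep (cell_verts y).
Proof. by case: (cell_vertsP y). Qed.

Lemma closedcell_hull y : closedcell H y = convex_hull (cell_verts y).
Proof. by case: (cell_vertsP y). Qed.

Lemma mem_cell_verts y z : (closedcell H y z /\ cox_vertex H z) <-> z \in cell_verts y.
Proof. by case: (cell_vertsP y). Qed.

Lemma closedcell_nth y j : (j < size (cell_verts y))%N -> closedcell H y (cell_verts y)`_j.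
Proof. by move=> jL; have /mem_cell_verts [] := mem_nth 0 jL. Qed.

Lemma eq_cell_verts y y' : closedcell H y' = closedcell H y -> cell_verts y' =i cell_verts y.
Proof.
move=> yy' p; apply/idP/idP => /mem_cell_verts [yp Vp]; apply/mem_cell_verts.
  by rewrite -yy'.
by rewrite yy'.
Qed.

Lemma cell_verts_coord_eq y (lam mu : nat -> R) :
  \sum_(i < size (cell_verts y)) lam i = 1 -> \sum_(i < size (cell_verts y)) mu i = 1 ->
  \sum_(i < size (cell_verts y)) lam i *: (cell_verts y)`_i =
  \sum_(i < size (cell_verts y)) mu i *: (cell_verts y)`_i ->
  forall i, (i < size (cell_verts y))%N -> lam i = mu i.
Proof.
move=> lam1 mu1 lam_mu i iL; apply/eqP; rewrite -subr_eq0; apply/eqP.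
apply: (@cell_verts_indep y (fun j => lam j - mu j)) => //; first by rewrite sumrB lam1 mu1 subrr.
by under eq_bigr => j _ do rewrite scalerBl; rewrite sumrB lam_mu subrr.
Qed.

Lemma cell_verts_span y : generic H y -> forall z, exists lam : nat -> R,
  \sum_(i < size (cell_verts y)) lam i = 1 /\
  z = \sum_(i < size (cell_verts y)) lam i *: (cell_verts y)`_i.
Proof.
move=> Gy z; have [t t0 tz] := closedcell_toward HA z Gy.
move: tz (closedcell_refl (H := H) y); rewrite !closedcell_hull.
move=> [l1 [_ [l11 zE]]] [l0 [_ [l01 yE]]].
(* z is the affine combination (1 - 1/t) y + (1/t) (y + t (z - y)) *)
exists (fun i => (1 - t^-1) * l0 i + t^-1 * l1 i); split.
  by rewrite big_split /= -!mulr_sumr l01 l11; ring.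
under eq_bigr => i _ do rewrite scalerDl -!scalerA.
rewrite big_split /= -!scaler_sumr -zE -yE.
rewrite scalerDr scalerA mulVf ?gt_eqF // scale1r scalerBl scale1r.
by rewrite addrA subrK addrC subrK.
Qed.

Lemma size_cell_verts y : generic H y -> size (cell_verts y) = n.+1.
Proof.
move=> Gy; apply/eqP; rewrite eqn_leq aff_indep_size ?cell_verts_indep //=.
  exact: affine_span_size (cell_verts_span Gy).
exact: cell_verts_indep.
Qed.

Lemma side_eq0_cell_verts y h : generic H y ->
  (forall p, p \in cell_verts y -> side h p = 0) -> forall z, side h z = 0.
Proof.
move=> Gy h0 z; have [lam [lam1 ->]] := cell_verts_span Gy z.
rewrite side_barycenter //; apply: big1 => i _.
by rewrite h0 ?mulr0 // mem_nth.
Qed.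

Lemma cell_verts_off_wall y h : generic H y -> H h ->
  exists2 j, (j < size (cell_verts y))%N & side h (cell_verts y)`_j != 0.
Proof.
move=> Gy Hh; apply: contrapT => on_wall; move/eqP: (Gy h Hh); apply.
apply: (side_eq0_cell_verts Gy) => p pL; apply: contrapT => hp.
by apply: on_wall; exists (index p (cell_verts y)); rewrite ?index_mem ?nth_index //; apply/eqP.
Qed.

Lemma side_reflect_in_wall h h' : H h -> H h' -> exists h'' (mu : R),
  [/\ H h'', mu != 0 & forall x, side h' (reflect_in h x) = mu * side h'' x].
Proof.
move=> Hh Hh'; have h0 := wall_normal_neq0 HA Hh.
case: HA => nz refl_stable _; have [h'' [Hh'' h''E]] := refl_stable h h' Hh Hh'.
set k := 2 * dotv h'.1 h.1 / dotv h.1 h.1.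
have [mu mu0 muE] : exists2 mu : R, mu != 0 &
    forall x, side (h'.1 - k *: h.1, h'.2 - k * h.2) x = mu * side h'' x.
  apply: side_proportional (nz _ Hh'') _ => x.
  have -> : side (h'.1 - k *: h.1, h'.2 - k * h.2) x = side h' (reflect_in h x).
    by rewrite side_reflect_inE.
  change (hplane h'' x <-> hplane h' (reflect_in h x)); rewrite h''E; split.
    by case=> w hw <-; rewrite reflect_inK.
  by move=> hx; exists (reflect_in h x); rewrite ?reflect_inK.
by exists h'', mu; split => // x; rewrite side_reflect_inE -muE.
Qed.

Lemma closedcell_reflect_in h x z : H h ->
  closedcell H x z -> closedcell H (reflect_in h x) (reflect_in h z).
Proof.
move=> Hh /closedcellP xz; apply/closedcellP => h' Hh'.
have [h'' [mu [Hh'' mu0 muE]]] := side_reflect_in_wall Hh Hh'.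
have [z0 xz0] := xz h'' Hh''; rewrite !muE; split.
  by move/eqP; rewrite mulf_eq0 (negbTE mu0) /= => /eqP /z0 ->; rewrite mulr0.
by rewrite mulrACA mulr_ge0 // -expr2 sqr_ge0.
Qed.

Lemma closedcell_reflect_inE h x z : H h ->
  closedcell H (reflect_in h x) z <-> closedcell H x (reflect_in h z).
Proof.
move=> Hh; have hK := reflect_inK (wall_normal_neq0 HA Hh).
split => /(closedcell_reflect_in Hh); by rewrite hK.
Qed.

Lemma cox_vertex_reflect_in h z : H h -> cox_vertex H z -> cox_vertex H (reflect_in h z).
Proof.
move=> Hh zV; have hK := reflect_inK (wall_normal_neq0 HA Hh).
apply/funext => w; apply/propext; rewrite closedcell_reflect_inE // zV /=.
by split => [<-|->]; rewrite hK.
Qed.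

Lemma generic_reflect_in h y : H h -> generic H y -> generic H (reflect_in h y).
Proof.
move=> Hh Gy h' Hh'; have [h'' [mu [Hh'' mu0 ->]]] := side_reflect_in_wall Hh Hh'.
by rewrite mulf_neq0 // Gy.
Qed.

Lemma mem_cell_verts_reflect_in h y z : H h ->
  (z \in cell_verts (reflect_in h y)) = (reflect_in h z \in cell_verts y).
Proof.
move=> Hh; have hK := reflect_inK (wall_normal_neq0 HA Hh).
apply/idP/idP => /mem_cell_verts [yz zV]; apply/mem_cell_verts; split.
- by rewrite -closedcell_reflect_inE.
- exact: cox_vertex_reflect_in.
- by rewrite closedcell_reflect_inE.
- by have := cox_vertex_reflect_in Hh zV; rewrite hK.
Qed.

End Chambers.

Section Facets.
Variables (R : realType) (n : nat) (H : set ('rV[R]_n * R)).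
Hypothesis HA : affine_reflection_arrangement H.
Hypothesis HS : simplicial_arrangement H.
Hypothesis n_gt0 : (0 < n)%N.
Implicit Types (x y z p q : 'rV[R]_n) (h : 'rV[R]_n * R).
Local Notation verts y := (cell_verts HS y).

Definition wall_opposite y i0 h := [/\ H h, side h (verts y)`_i0 != 0 &
  forall j, (j < size (verts y))%N -> j != i0 -> side h (verts y)`_j = 0].

Definition facet_weight (i0 j : nat) : R := if j == i0 then 0 else n%:R^-1.

Definition facet_center y i0 : 'rV[R]_n :=
  \sum_(j < size (verts y)) facet_weight i0 j *: (verts y)`_j.

Lemma facet_weight_ge0 i0 j : 0 <= facet_weight i0 j.
Proof. by rewrite /facet_weight; case: eqP => // _; rewrite invr_ge0 ler0n. Qed.

Lemma facet_weight_sum y i0 : generic H y -> (i0 < size (verts y))%N ->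
  \sum_(j < size (verts y)) facet_weight i0 j = 1.
Proof.
move=> Gy i0L; rewrite (bigD1 (Ordinal i0L)) //= /facet_weight eqxx add0r.
rewrite (eq_bigr (fun _ => n%:R^-1)); last by move=> j /negbTE; rewrite -val_eqE /= => ->.
rewrite sumr_const cardC1 card_ord size_cell_verts //= -[_ *+ n]mulr_natr.
by rewrite mulVf // pnatr_eq0 -lt0n.
Qed.

Lemma closedcell_facet_center_of y i0 y' : generic H y -> (i0 < size (verts y))%N ->
  (forall j, (j < size (verts y))%N -> j != i0 -> closedcell H y' (verts y)`_j) ->
  closedcell H y' (facet_center y i0).
Proof.
move=> Gy i0L y'f; pose pt j := if j == i0 then y' else (verts y)`_j.
have -> : facet_center y i0 = \sum_(j < size (verts y)) facet_weight i0 j *: pt j.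
  by apply: eq_bigr => j _; rewrite /pt; case: eqP => // ->; rewrite /facet_weight eqxx !scale0r.
apply: closedcell_convex => [j _||j jL]; first exact: facet_weight_ge0.
  exact: facet_weight_sum.
by rewrite /pt; case: eqP => [_|/eqP]; [apply: closedcell_refl | apply: y'f].
Qed.

Lemma closedcell_facet_center y i0 : generic H y -> (i0 < size (verts y))%N ->
  closedcell H y (facet_center y i0).
Proof. by move=> Gy i0L; apply: closedcell_facet_center_of => // j jL _; apply: closedcell_nth. Qed.

Lemma side_facet_center y i0 h : generic H y -> (i0 < size (verts y))%N ->
  side h (facet_center y i0) = \sum_(j < size (verts y)) facet_weight i0 j * side h (verts y)`_j.
Proof. by move=> Gy i0L; rewrite side_barycenter // facet_weight_sum. Qed.

Lemma facet_center_on_wall y i0 h : generic H y -> (i0 < size (verts y))%N -> H h ->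
  side h (facet_center y i0) = 0 ->
  forall j, (j < size (verts y))%N -> j != i0 -> side h (verts y)`_j = 0.
Proof.
move=> Gy i0L Hh; rewrite side_facet_center // => /(congr1 ( *%R (side h y))).
rewrite mulr0 mulr_sumr => /eqP; rewrite psumr_eq0 => [/allP wall j jL ji0|j _].
  have /= := wall (Ordinal jL) (mem_index_enum _).
  rewrite /facet_weight (negbTE ji0) mulrCA !mulf_eq0 invr_eq0 pnatr_eq0 eqn0Ngt n_gt0.
  by rewrite (negbTE (Gy h Hh)) /= => /eqP.
rewrite mulrCA mulr_ge0 ?facet_weight_ge0 //.
by have /closedcellP/(_ h Hh) [] := closedcell_nth (ltn_ord j).
Qed.

Lemma side_facet_center_opposite y i0 h : generic H y -> (i0 < size (verts y))%N ->
  (forall j, (j < size (verts y))%N -> j != i0 -> side h (verts y)`_j = 0) ->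
  side h (facet_center y i0) = 0.
Proof.
move=> Gy i0L hf; rewrite side_facet_center //; apply: big1 => j _.
have [ji0|ji0] := eqVneq (nat_of_ord j) i0; first by rewrite /facet_weight ji0 eqxx mul0r.
by rewrite hf // mulr0.
Qed.

(* otherwise a small push of the facet center away from the opposite vertex stays in the
   chamber, giving that vertex a negative barycentric coordinate *)
Lemma facet_center_not_generic y i0 : generic H y -> (i0 < size (verts y))%N ->
  ~ generic H (facet_center y i0).
Proof.
move=> Gy i0L Gb; set b := facet_center y i0 in Gb.
have yb := closedcell_facet_center Gy i0L.
have [t [t0 _ _ keep]] := segment_keeps_sides HA b (b - (verts y)`_i0).
set z := b + t *: (b - (verts y)`_i0).
have : closedcell H y z.
  apply/closedcellP => h Hh.
  have ybh := closedcell_side_gt0 Hh yb (Gy h Hh) (Gb h Hh).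
  have := keep h Hh (Gb h Hh) t; rewrite lexx ltW // => /(_ isT) bz.
  have yz : 0 < side h y * side h z by nra.
  by split => [hy|]; [move: yz; rewrite hy mul0r ltxx | exact: ltW].
rewrite closedcell_hull => -[lam [lam0 [lam1 zE]]].
pose gam j := (1 + t) * facet_weight i0 j - t * (j == i0)%:R.
have gam_single (F : nat -> 'rV[R]_n) : \sum_(j < size (verts y)) (j == i0 :> nat)%:R *: F j = F i0.
  rewrite (bigD1 (Ordinal i0L)) //= eqxx scale1r big1 ?addr0 //.
  by move=> j /negbTE; rewrite -val_eqE /= => ->; rewrite scale0r.
have gam1 : \sum_(j < size (verts y)) gam j = 1.
  rewrite sumrB -!mulr_sumr facet_weight_sum // mulr1.
  rewrite (bigD1 (Ordinal i0L)) //= eqxx big1 ?addr0 ?mulr1; first by ring.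
  by move=> j /negbTE; rewrite -val_eqE /= => ->.
have gamz : z = \sum_(j < size (verts y)) gam j *: (verts y)`_j.
  under eq_bigr => j _ do rewrite /gam scalerBl -!scalerA.
  by rewrite sumrB -!scaler_sumr gam_single /z scalerDl scale1r scalerBr addrA.
have := cell_verts_coord_eq lam1 gam1 _ i0L; rewrite -zE -gamz => /(_ erefl).
rewrite /gam /facet_weight eqxx mulr0 sub0r mulr1 => lam_i0.
by have := lam0 i0; rewrite lam_i0 oppr_ge0 leNgt t0.
Qed.

Lemma exists_wall_opposite y i0 : generic H y -> (i0 < size (verts y))%N ->
  exists h, wall_opposite y i0 h.
Proof.
move=> Gy i0L; have [[h [Hh hb]]|] := pselect (exists h, H h /\ side h (facet_center y i0) = 0).
  have hf := facet_center_on_wall Gy i0L Hh hb.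
  exists h; split => //; have [j jL hj] := cell_verts_off_wall HA HS Gy Hh.
  by have [<-|ji0] := eqVneq j i0; last by rewrite hf ?eqxx in hj.
move=> none; case: (facet_center_not_generic Gy i0L) => h Hh.
by apply/eqP => hb; apply: none; exists h.
Qed.

Lemma wall_opposite_proportional y i0 h h' : generic H y -> (i0 < size (verts y))%N ->
  wall_opposite y i0 h ->
  (forall j, (j < size (verts y))%N -> j != i0 -> side h' (verts y)`_j = 0) ->
  forall z, side h' z * side h (verts y)`_i0 = side h' (verts y)`_i0 * side h z.
Proof.
move=> Gy i0L [Hh hi0 hf] h'f z.
set s := side h (verts y)`_i0 in hi0 *; pose mu := side h' (verts y)`_i0 / s.
have diffE x : side (h'.1 - mu *: h.1, h'.2 - mu * h.2) x = side h' x - mu * side h x.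
  by rewrite /side /= dotvBl dotvZl; ring.
have : side (h'.1 - mu *: h.1, h'.2 - mu * h.2) z = 0.
  apply: (side_eq0_cell_verts HA Gy) => p pL; rewrite diffE -(nth_index 0 pL).
  have [->|ji0] := eqVneq (index p (verts y)) i0; first by rewrite /mu divfK // subrr.
  by rewrite hf ?h'f ?index_mem // mulr0 subrr.
rewrite diffE => /eqP; rewrite subr_eq0 => /eqP ->.
by rewrite /mu mulrAC divfK.
Qed.

Lemma facet_center_wall_sides y i0 h h' q : generic H y -> (i0 < size (verts y))%N ->
  wall_opposite y i0 h -> H h' -> side h' (facet_center y i0) = 0 ->
  0 < side h q * side h (verts y)`_i0 -> 0 < side h' y * side h' q.
Proof.
move=> Gy i0L hy Hh' b0 qi0; have [Hh hi0 hf] := hy.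
have h'f := facet_center_on_wall Gy i0L Hh' b0.
have h'i0 : side h' (verts y)`_i0 != 0.
  have [j jL hj] := cell_verts_off_wall HA HS Gy Hh'.
  by have [<-|ji0] := eqVneq j i0; last by rewrite h'f ?eqxx in hj.
have yi0 := closedcell_side_gt0 Hh' (closedcell_nth i0L) (Gy h' Hh') h'i0.
have prop := wall_opposite_proportional Gy i0L hy h'f q.
set s := side h (verts y)`_i0 in hi0 qi0 prop.
have s2 : 0 < s * s by rewrite lt_def mulf_neq0 // -expr2 sqr_ge0.
rewrite -(pmulr_lgt0 _ s2).
have -> : side h' y * side h' q * (s * s) = side h' y * (side h' q * s) * s by ring.
rewrite prop.
have -> : side h' y * (side h' (verts y)`_i0 * side h q) * s =
          (side h' y * side h' (verts y)`_i0) * (side h q * s) by ring.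
exact: mulr_gt0.
Qed.

(* moving from the facet center slightly towards q gives a generic point which lies in
   the cell of y' and on the same side as y of every wall *)
Lemma closedcell_through_facet y i0 h y' q : generic H y -> (i0 < size (verts y))%N ->
  wall_opposite y i0 h -> generic H y' ->
  (forall j, (j < size (verts y))%N -> j != i0 -> closedcell H y' (verts y)`_j) ->
  closedcell H y' q -> 0 < side h q * side h (verts y)`_i0 ->
  closedcell H y' = closedcell H y.
Proof.
move=> Gy i0L hy Gy' y'f y'q qi0; have [Hh _ hf] := hy.
set b := facet_center y i0.
have [t [t0 t1 _ keep]] := segment_keeps_sides HA b (q - b).
set z := b + t *: (q - b).
have y'z : closedcell H y' z.
  apply: closedcell_segment => //; first by rewrite ltW.
  exact: closedcell_facet_center_of Gy i0L y'f.
have yz h' : H h' -> 0 < side h' y * side h' z.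
  move=> Hh'; have [b0|b0] := eqVneq (side h' b) 0.
    apply: facet_center_wall_sides hy Hh' b0 _ => //.
    by rewrite /z /b side_segment side_facet_center_opposite // subr0 add0r -mulrA mulr_gt0.
  have := closedcell_side_gt0 Hh' (closedcell_facet_center Gy i0L) (Gy h' Hh') b0.
  have := keep h' Hh' b0 t; rewrite lexx ltW // => /(_ isT).
  nra.
have Gz : generic H z.
  by move=> h' Hh'; have := yz h' Hh'; apply: contraTneq => ->; rewrite mulr0 ltxx.
rewrite -(closedcell_eq_sides Gy yz); apply: closedcell_eq_sides => // h' Hh'.
by rewrite mulrC; apply: closedcell_side_gt0 y'z _ _; [|exact: Gy'|exact: Gz].
Qed.

Lemma reflect_facet_verts y i0 h p : generic H y -> (i0 < size (verts y))%N ->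
  wall_opposite y i0 h -> p \in verts (reflect_in h y) ->
  p != reflect_in h (verts y)`_i0 ->
  exists m, [/\ (m < size (verts y))%N, m != i0 & (verts y)`_m = p].
Proof.
move=> Gy i0L [Hh _ hf] p' pi0; have hK := reflect_inK (wall_normal_neq0 HA Hh).
have pL : reflect_in h p \in verts y by rewrite -mem_cell_verts_reflect_in.
set m := index (reflect_in h p) (verts y).
have mL : (m < size (verts y))%N by rewrite index_mem.
have Lm : (verts y)`_m = reflect_in h p by rewrite nth_index.
have mi0 : m != i0 by apply: contra_neq pi0 => mi0; rewrite -mi0 Lm hK.
exists m; split => //; have := hf m mL mi0.
rewrite Lm side_reflect_in ?(wall_normal_neq0 HA) // => /eqP; rewrite oppr_eq0 => /eqP hp.
by rewrite reflect_in_id.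
Qed.

Lemma reflect_wall_opposite y i0 h : generic H y -> (i0 < size (verts y))%N ->
  wall_opposite y i0 h ->
  exists i1, [/\ (i1 < size (verts (reflect_in h y)))%N,
    (verts (reflect_in h y))`_i1 = reflect_in h (verts y)`_i0,
    wall_opposite (reflect_in h y) i1 h &
    forall j, (j < size (verts (reflect_in h y)))%N -> j != i1 ->
      exists m, [/\ (m < size (verts y))%N, m != i0 & (verts y)`_m = (verts (reflect_in h y))`_j]].
Proof.
move=> Gy i0L hy; have [Hh hi0 hf] := hy; have hK := reflect_inK (wall_normal_neq0 HA Hh).
set L' := verts (reflect_in h y).
have i0L' : reflect_in h (verts y)`_i0 \in L'.
  by rewrite mem_cell_verts_reflect_in // hK mem_nth.
exists (index (reflect_in h (verts y)`_i0) L'); set i1 := index _ L'.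
have i1L : (i1 < size L')%N by rewrite index_mem.
have L'i1 : L'`_i1 = reflect_in h (verts y)`_i0 by rewrite nth_index.
have facet j : (j < size L')%N -> j != i1 ->
    exists m, [/\ (m < size (verts y))%N, m != i0 & (verts y)`_m = L'`_j].
  move=> jL ji1; apply: (reflect_facet_verts Gy i0L hy (mem_nth 0 jL)).
  by rewrite -L'i1 nth_uniq ?cell_verts_uniq.
split => //; split => [//||j jL ji1].
  by rewrite L'i1 side_reflect_in ?oppr_eq0 ?(wall_normal_neq0 HA).
by have [m [mL mi0 <-]] := facet j jL ji1; apply: hf.
Qed.

Lemma chambers_through_facet y i0 h y' : generic H y -> (i0 < size (verts y))%N ->
  wall_opposite y i0 h -> generic H y' ->
  (forall j, (j < size (verts y))%N -> j != i0 -> closedcell H y' (verts y)`_j) ->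
  closedcell H y' = closedcell H y \/ closedcell H y' = closedcell H (reflect_in h y).
Proof.
move=> Gy i0L hy Gy' y'f; have [Hh hi0 _] := hy.
have [j jL hq] := cell_verts_off_wall HA HS Gy' Hh.
have y'q := closedcell_nth jL; set q := (verts y')`_j in hq y'q.
have [qi0|qi0] : 0 < side h q * side h (verts y)`_i0 \/
                 0 < side h q * side h (reflect_in h (verts y)`_i0).
    rewrite side_reflect_in ?(wall_normal_neq0 HA) // mulrN oppr_gt0.
    by have := mulf_neq0 hq hi0; rewrite neq_lt => /orP [] ->; [right|left].
  by left; apply: closedcell_through_facet qi0.
right; have [i1 [i1L L'i1 hy' facet]] := reflect_wall_opposite Gy i0L hy.
apply: (closedcell_through_facet (generic_reflect_in HA Hh Gy) i1L hy' Gy' _ y'q).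
  by move=> j' j'L j'i1; have [m [mL mi0 <-]] := facet j' j'L j'i1; apply: y'f.
by rewrite L'i1.
Qed.

Lemma facet_walls_separate y x z : generic H y ->
  (forall j, (j < size (verts y))%N ->
     exists2 h, wall_opposite y j h & side h x = side h z) ->
  x = z.
Proof.
move=> Gy walls.
have [lx [lx1 xE]] := cell_verts_span HA HS Gy x.
have [lz [lz1 zE]] := cell_verts_span HA HS Gy z.
suff lxz j : (j < size (verts y))%N -> lx j = lz j.
  by rewrite xE zE; apply: eq_bigr => j _; rewrite lxz.
move=> jL; have [h [Hh hj hf] hxz] := walls j jL.
have side_coord (lam : nat -> R) : \sum_(i < size (verts y)) lam i = 1 ->
    side h (\sum_(i < size (verts y)) lam i *: (verts y)`_i) = lam j * side h (verts y)`_j.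
  move=> lam1; rewrite side_barycenter // (bigD1 (Ordinal jL)) //= big1 ?addr0 //.
  by move=> i; rewrite -val_eqE /= => ij; rewrite hf ?mulr0.
by apply: (mulIf hj); rewrite -(side_coord lx) // -(side_coord lz) // -xE -zE.
Qed.

End Facets.

Section AffineFunctions.
Variables (R : realType) (n : nat) (F : 'rV[R]_n -> R).
Hypothesis F_convex : forall (t : R) z1 z2, 0 <= t <= 1 ->
  F (t *: z1 + (1 - t) *: z2) = t * F z1 + (1 - t) * F z2.

Lemma affine_on_lines (t : R) z1 z2 :
  F (t *: z1 + (1 - t) *: z2) = t * F z1 + (1 - t) * F z2.
Proof.
(* for t > 1, z1 is a convex combination of the point on the line and z2 *)
have beyond s w1 w2 : 1 < s -> F (s *: w1 + (1 - s) *: w2) = s * F w1 + (1 - s) * F w2.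
  move=> s1; have s0 : 0 < s by apply: lt_trans s1.
  have s_neq0 : s != 0 by rewrite gt_eqF.
  set p := s *: w1 + (1 - s) *: w2.
  have w1E : w1 = s^-1 *: p + (1 - s^-1) *: w2.
    rewrite /p scalerDr !scalerA mulVf // scale1r -addrA -scalerDl.
    have -> : s^-1 * (1 - s) + (1 - s^-1) = 0 by field.
    by rewrite scale0r addr0.
  have s_inv : 0 <= s^-1 <= 1 by rewrite invr_ge0 ltW //= invf_le1 // ltW.
  by have := F_convex p w2 s_inv; rewrite -w1E => ->; field.
have [t1|t1] := leP t 1; last exact: beyond.
have [t0|t0] := leP 0 t; first by apply: F_convex; rewrite t0.
have tE : 1 - (1 - t) = t :> R by ring.
have := beyond (1 - t) z2 z1; rewrite tE [_ *: z2 + _]addrC => -> //; first by ring.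
lra.
Qed.

Lemma exists_affine_form : exists (c : R) (g : 'rV[R]_n), forall z, F z = c + dotv g z.
Proof.
pose lin v := F v - F 0.
have linZ (t : R) v : lin (t *: v) = t * lin v.
  by have := affine_on_lines t v 0; rewrite scaler0 addr0 /lin => ->; ring.
have linD v w : lin (v + w) = lin v + lin w.
  have -> : v + w = 2 *: (2^-1 *: v + (1 - 2^-1) *: w).
    have half : 1 - 2^-1 = 2^-1 :> R by field.
    by rewrite half scalerDr !scalerA mulfV ?pnatr_eq0 // !scale1r.
  by rewrite linZ /lin affine_on_lines; field.
have lin_sum (I : Type) (r : seq I) (f : I -> 'rV[R]_n) :
    lin (\sum_(i <- r) f i) = \sum_(i <- r) lin (f i).
  by elim/big_rec2: _ => [|i x y _ <-]; rewrite ?linD // /lin subrr.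
exists (F 0), (\row_k lin 'e_k) => z.
rewrite -[F z](subrK (F 0)) addrC; congr (_ + _).
rewrite -/(lin z) {1}(row_sum_delta z) lin_sum; apply: eq_bigr => k _.
by rewrite linZ mxE mulrC.
Qed.

End AffineFunctions.

Local Open Scope fset_scope.
Local Open Scope ring_scope.

Lemma big_seq_indicator (T : eqType) (M : nmodType) (s : seq T) a (F : T -> M) :
  uniq s -> a \in s -> \sum_(w <- s) F w *+ (w == a) = F a.
Proof.
move=> us a_s; rewrite (bigD1_seq a) //= eqxx mulr1n big1 ?addr0 //.
by move=> w /negbTE ->; rewrite mulr0n.
Qed.

Lemma exists_avoid2 (T : eqType) (x1 x2 x3 c c' : T) :
  x1 != x2 -> x1 != x3 -> x2 != x3 ->
  exists2 x, x \in [:: x1; x2; x3] & (x != c) && (x != c').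
Proof.
move=> n12 n13 n23; apply/hasP; apply/negPn/negP; rewrite -all_predC /= !negb_and !negbK.
case/and4P => /orP [] /eqP e1 /orP [] /eqP e2 /orP [] /eqP e3 _; subst;
  by rewrite ?eqxx in n12 n13 n23.
Qed.

Lemma thick_third_chamber (V : choiceType) (D : set {fset V}) P C C' :
  thick D -> panel D P -> exists E, [/\ chamber D E, P `<=` E, E != C & E != C'].
Proof.
move=> thickD /thickD [E1 [E2 [E3 [c1 c2 c3 [s1 [s2 s3]] [n12 n13 n23]]]]].
have [E + /andP [EC EC']] := exists_avoid2 C C' n12 n13 n23.
by rewrite !inE => /or3P [] /eqP ?; subst; [exists E1 | exists E2 | exists E3].
Qed.

Section Building.
Variables (R : realType) (n : nat) (V : choiceType).
Variables (H : set ('rV[R]_n * R)) (D : set {fset V}) (A : set (set {fset V})).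
Hypothesis HB : euclidean_building H D A.

Lemma building_arrangement : affine_reflection_arrangement H.
Proof. by case: HB => -[]. Qed.

Lemma building_simplicial : simplicial_arrangement H.
Proof. by case: HB => -[]. Qed.

Lemma building_complex : complex D.
Proof. by case: HB. Qed.

Lemma apartmentP S : A S ->
  [/\ complex S, (forall s, S s -> D s) & exists psi, cox_iso H S psi].
Proof. by case: HB => _ _ apt _ _; apply: apt. Qed.

Lemma exists_apartment2 s t : D s -> D t -> exists S, [/\ A S, S s & S t].
Proof. by case: HB => _ _ _ apt2 _; apply: apt2. Qed.

Lemma apartment_iso_fixing S S' C : A S -> A S' -> chamber D C -> S C -> S' C ->
  exists2 f, cx_iso S S' f & forall v, cvertex S v -> cvertex S' v -> f v = v.
Proof.
case: HB => _ _ _ _ iso AS AS' DC SC S'C.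
by have [f []] := iso S S' C AS AS' DC SC S'C; exists f.
Qed.

Local Notation HA := building_arrangement.
Local Notation HS := building_simplicial.
Local Notation verts y := (cell_verts HS y).

Section Apartment.
Variables (S : set {fset V}) (psi : V -> 'rV[R]_n).
Hypotheses (AS : A S) (Hpsi : cox_iso H S psi).
Variable v0 : V.

Lemma apartment_complex : complex S.
Proof. by case: (apartmentP AS). Qed.

Lemma apartment_sub s : S s -> D s.
Proof. by case: (apartmentP AS) => _ sub _; apply: sub. Qed.

Lemma apartment_vertex s v : S s -> v \in s -> cvertex S v.
Proof. by move=> Ss vs; apply: apartment_complex Ss _; rewrite fsub1set. Qed.

Lemma cox_iso_inj v w : cvertex S v -> cvertex S w -> psi v = psi w -> v = w.
Proof. by case: Hpsi => inj _ _; apply: inj. Qed.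

Lemma cox_iso_onto z : cox_vertex H z -> exists v, cvertex S v /\ psi v = z.
Proof. by case: Hpsi => _ onto _; apply: onto. Qed.

Lemma cox_iso_simplex s : (forall v, v \in s -> cvertex S v) ->
  (S s <-> cox_simplex H (psi @` [set v | v \in s])%classic).
Proof. by case: Hpsi => _ _ simp; apply: simp. Qed.

Lemma apartment_simplex_cell s : S s -> exists x, forall v, v \in s ->
  closedcell H x (psi v) /\ cox_vertex H (psi v).
Proof.
move=> Ss; have [x xs] := (cox_iso_simplex (fun v vs => apartment_vertex Ss vs)).1 Ss.
by exists x => v vs; apply: xs; exists v.
Qed.

Lemma cox_iso_vertex v : cvertex S v -> cox_vertex H (psi v).
Proof. by move=> Sv; have [x xv] := apartment_simplex_cell Sv; case: (xv v (fset11 v)). Qed.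

Lemma apartment_simplex_chamber s : S s ->
  exists2 y, generic H y & forall v, v \in s -> psi v \in verts y.
Proof.
move=> Ss; have [x xs] := apartment_simplex_cell Ss.
have [y Gy xy] := exists_generic_cell HA x.
by exists y => // v vs; have [xv Vv] := xs v vs; apply/mem_cell_verts; split => //; apply: xy.
Qed.

(* the vertex of S over p, or the junk value v0 if p is not a vertex of the arrangement *)
Definition vertex_at (p : 'rV[R]_n) : V :=
  if pselect (exists v, cvertex S v /\ psi v = p) is left e then projT1 (cid e) else v0.

Lemma vertex_atP p : cox_vertex H p -> cvertex S (vertex_at p) /\ psi (vertex_at p) = p.
Proof.
move=> Vp; rewrite /vertex_at; case: pselect => [e|[]]; first exact: (projT2 (cid e)).
exact: cox_iso_onto.
Qed.

Lemma vertex_at_psi v : cvertex S v -> vertex_at (psi v) = v.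
Proof. by move=> Sv; have [Sv' ?] := vertex_atP (cox_iso_vertex Sv); apply: cox_iso_inj. Qed.

Lemma apartment_simplex_of_cell x (l : seq 'rV[R]_n) :
  (forall p, p \in l -> closedcell H x p /\ cox_vertex H p) ->
  S (vertex_at @` [fset p in l]).
Proof.
move=> xl; have vertex w : w \in vertex_at @` [fset p in l] -> cvertex S w.
  by case/imfsetP => p /=; rewrite inE => pl ->; case: (vertex_atP (proj2 (xl p pl))).
apply/(cox_iso_simplex vertex); exists x => _ [w /imfsetP [p /= + ->] <-]; rewrite inE => pl.
by have [_ ->] := vertex_atP (proj2 (xl p pl)); apply: xl.
Qed.

Lemma exists_located z : exists x : realisation R D, located S psi (sval x) z.
Proof.
have [_ _ hull verts_z] := cell_vertsP HS z.
have := closedcell_refl (H := H) z; rewrite hull => -[lam [lam0 [lam1 zE]]].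
set L := verts z in lam0 lam1 zE verts_z.
have zL p : p \in L -> closedcell H z p /\ cox_vertex H p by move/verts_z.
set s := vertex_at @` [fset p in L].
have Ss : S s := apartment_simplex_of_cell zL.
have Ls (i : 'I_(size L)) : vertex_at L`_i \in s.
  by apply/imfsetP; exists L`_i => //=; rewrite inE mem_nth.
pose q w := \sum_(i < size L) lam i *+ (vertex_at L`_i == w).
have q_out w : w \notin s -> q w = 0.
  move=> ws; apply: big1 => i _; case: eqP => [iw|_]; last by rewrite mulr0n.
  by move: ws; rewrite -iw Ls.
have q_real : realpt D q.
  exists s; split => //; first exact: apartment_sub.
    by move=> w; apply: sumr_ge0 => i _; rewrite mulrn_wge0.
  rewrite exchange_big /= -lam1; apply: eq_bigr => i _.
  under eq_bigr => w _ do rewrite eq_sym -mulr_natr.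
  by rewrite -mulr_sumr (big_seq_indicator (fun=> 1)) ?fset_uniq ?Ls ?mulr1.
exists (exist _ q q_real), s; split => //=.
rewrite zE; under eq_bigr => w _ do rewrite scaler_suml.
rewrite exchange_big /=; apply: eq_bigr => i _.
under eq_bigr => w _ do rewrite -scalerMnl scalerMnr eq_sym.
rewrite -scaler_sumr big_seq_indicator ?fset_uniq ?Ls //.
by have [_ ->] := vertex_atP (proj2 (zL _ (mem_nth 0 (ltn_ord i)))).
Qed.

Definition chamber_at y : {fset V} := vertex_at @` [fset p in verts y].

Lemma mem_chamber_at y w : w \in chamber_at y <-> exists2 p, p \in verts y & w = vertex_at p.
Proof.
split; first by case/imfsetP => p /=; rewrite inE => p_y ->; exists p.
by case=> p p_y ->; apply/imfsetP; exists p => //=; rewrite inE.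
Qed.

Lemma vertex_at_cell_verts y p : p \in verts y ->
  cvertex S (vertex_at p) /\ psi (vertex_at p) = p.
Proof. by case/mem_cell_verts => _; apply: vertex_atP. Qed.

Lemma vertex_at_nth_chamber_at y j : (j < size (verts y))%N ->
  vertex_at (verts y)`_j \in chamber_at y.
Proof. by move=> jL; apply/mem_chamber_at; exists (verts y)`_j; rewrite ?mem_nth. Qed.

Lemma vertex_at_nth_inj y j m : (j < size (verts y))%N -> (m < size (verts y))%N ->
  vertex_at (verts y)`_j = vertex_at (verts y)`_m -> j = m.
Proof.
move=> jL mL jm; apply/eqP; rewrite -(nth_uniq 0 jL mL (cell_verts_uniq HS y)).
have [_ <-] := vertex_at_cell_verts (mem_nth 0 jL).
by have [_ <-] := vertex_at_cell_verts (mem_nth 0 mL); rewrite jm.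
Qed.

Lemma apartment_chamber_at y : S (chamber_at y).
Proof. by apply: (apartment_simplex_of_cell (x := y)) => p /mem_cell_verts. Qed.

Lemma card_chamber_at y : generic H y -> #|` chamber_at y| = n.+1.
Proof.
move=> Gy; rewrite -(size_cell_verts HA HS Gy) -(undup_id (cell_verts_uniq HS y)) -card_fseq.
apply/eqP/card_in_imfsetP => p q; rewrite !inE => p_y q_y pq.
by rewrite -(proj2 (vertex_at_cell_verts p_y)) -(proj2 (vertex_at_cell_verts q_y)) pq.
Qed.

Section Functional.
Variable a : realisation R D -> R.
Hypothesis Haff : affine_functional H A a.

(* the value of a at some point of |S| located at z; by apt_value_located any such
   point gives the same value *)
Definition apt_value z : R := a (projT1 (cid (exists_located z))).

Lemma apt_value_located x z : located S psi (sval x) z -> a x = apt_value z.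
Proof.
move=> xz; rewrite /apt_value; set y := projT1 _.
have yz : located S psi (sval y) z := projT2 (cid (exists_located z)).
have xz' : located S psi (sval x) (1 *: z + (1 - 1) *: z).
  by rewrite scale1r subrr scale0r addr0.
have t01 : 0 <= (1 : R) <= 1 by rewrite ler01 lexx.
by rewrite (@Haff S psi AS Hpsi y y x z z 1 t01 yz yz xz') mul1r subrr mul0r addr0.
Qed.

Lemma apt_value_affine : exists (c : R) (g : 'rV[R]_n), forall z, apt_value z = c + dotv g z.
Proof.
apply: exists_affine_form => t z1 z2 t01.
have [x1 x1z] := exists_located z1; have [x2 x2z] := exists_located z2.
have [w wz] := exists_located (t *: z1 + (1 - t) *: z2).
rewrite -(apt_value_located wz) -(apt_value_located x1z) -(apt_value_located x2z).
exact: Haff AS Hpsi _ _ _ _ _ _ t01 x1z x2z wz.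
Qed.

End Functional.
End Apartment.

Lemma cx_iso_vertex (S1 S2 : set {fset V}) (f : V -> V) (v : V) :
  cx_iso S1 S2 f -> cvertex S1 v -> cvertex S2 (f v).
Proof.
move=> [_ _ iso] S1v; have vS1 w : w \in [fset v] -> cvertex S1 w.
  by rewrite in_fset1 => /eqP ->.
by have := (iso _ vS1).1 S1v; rewrite imfset_fset1.
Qed.

Lemma cox_iso_comp (S1 S2 : set {fset V}) (f : V -> V) (psi : V -> 'rV[R]_n) :
  cx_iso S1 S2 f -> cox_iso H S2 psi -> cox_iso H S1 (psi \o f).
Proof.
move=> fiso [p_inj p_onto p_simp]; have [f_inj f_onto f_simp] := fiso; split.
- move=> v w S1v S1w /= fvw; apply: f_inj => //.
  by apply: p_inj fvw; apply: (cx_iso_vertex fiso).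
- move=> z /p_onto [v [S2v <-]]; have [w [S1w <-]] := f_onto v S2v.
  by exists w.
- move=> s S1s; rewrite f_simp // p_simp; last first.
    by move=> v /imfsetP [w /= ws ->]; apply: (cx_iso_vertex fiso); apply: S1s.
  suff -> : (psi @` [set v | v \in (f @` s)%fset] = (psi \o f) @` [set v | v \in s])%classic.
    by [].
  apply/seteqP; split => z.
    by case=> v /imfsetP [w /= ws ->] <-; exists w.
  by case=> w /= ws <-; exists (f w) => //=; apply/imfsetP; exists w.
Qed.

Lemma building_simplex_card (T : {fset V}) : D T -> (#|` T| <= n.+1)%N.
Proof.
move=> DT; have [S [AS ST _]] := exists_apartment2 DT DT.
have [_ _ [psi Hpsi]] := apartmentP AS.
have [y Gy Ty] := apartment_simplex_chamber AS Hpsi ST.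
rewrite -(size_cell_verts HA HS Gy) -(undup_id (cell_verts_uniq HS y)) -card_fseq.
have -> : #|` T| = #|` psi @` T|.
  apply/esym/eqP/card_in_imfsetP => v w vT wT.
  by apply: (cox_iso_inj Hpsi); apply: (apartment_vertex AS ST).
apply: fsubset_leq_card; apply/fsubsetP => _ /imfsetP [v /= vT ->].
by rewrite inE; apply: Ty.
Qed.

Lemma chamber_chamber_at (S : set {fset V}) (psi : V -> 'rV[R]_n) (v0 : V) y :
  A S -> cox_iso H S psi -> generic H y -> chamber D (chamber_at S psi v0 y).
Proof.
move=> AS Hpsi Gy; split; first exact: (apartment_sub AS (apartment_chamber_at Hpsi v0 y)).
move=> T DT CT; apply/eqP; rewrite eq_sym eqEfcard CT /=.
by rewrite (card_chamber_at Hpsi v0 Gy) building_simplex_card.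
Qed.

End Building.

Section ThickBuilding.
Variables (R : realType) (n : nat) (V : choiceType).
Variables (H : set ('rV[R]_n * R)) (D : set {fset V}) (A : set (set {fset V})).
Hypothesis HB : euclidean_building H D A.
Variables (a : realisation R D -> R) (v0 : V).
Hypothesis Haff : affine_functional H A a.
Local Notation HA := (building_arrangement HB).
Local Notation HS := (building_simplicial HB).
Local Notation verts y := (cell_verts HS y).
Local Notation value AS Hpsi := (apt_value HB AS Hpsi v0 a).

Lemma exists_vertex_point v : D [fset v] ->
  exists x : realisation R D, sval x = (fun w => (w == v)%:R).
Proof.
move=> Dv; suff real : realpt D (fun w => (w == v)%:R : R) by exists (exist _ _ real).
exists [fset v]; split.
- exact: Dv.
- by move=> w; rewrite in_fset1 => /negbTE ->.
- by move=> w; rewrite ler0n.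
- by rewrite big_seq_fset1 eqxx.
Qed.

Lemma apt_value_vertex (S : set {fset V}) (psi : V -> 'rV[R]_n) (AS : A S)
    (Hpsi : cox_iso H S psi) v x :
  S [fset v] -> sval x = (fun w => (w == v)%:R) -> a x = value AS Hpsi (psi v).
Proof.
move=> Sv xv; apply: apt_value_located => //; rewrite xv.
exists [fset v]; split => //; last by rewrite big_seq_fset1 eqxx scale1r.
by move=> w; rewrite in_fset1 => /negbTE ->.
Qed.

(* two affine functions agreeing on the vertices of a chamber agree everywhere *)
Lemma apt_value_fixed_chamber (S S1 : set {fset V}) (psi : V -> 'rV[R]_n) (f : V -> V)
    (AS : A S) (AS1 : A S1) (Hpsi : cox_iso H S psi) (fiso : cx_iso S1 S f) y :
  generic H y -> (forall v, v \in chamber_at HB S psi v0 y -> cvertex S1 v /\ f v = v) ->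
  forall z, value AS1 (cox_iso_comp fiso Hpsi) z = value AS Hpsi z.
Proof.
move=> Gy fixC z.
have [c1 [g1 E1]] := apt_value_affine HB AS1 (cox_iso_comp fiso Hpsi) v0 Haff.
have [c [g E0]] := apt_value_affine HB AS Hpsi v0 Haff.
suff : side (g1 - g, c - c1) z = 0 by rewrite E1 E0 /side dotvBl /=; lra.
apply: (side_eq0_cell_verts (HS := HS) HA Gy) => p p_y.
have [Sv psiv] := vertex_at_cell_verts Hpsi v0 p_y.
have [S1v fv] : cvertex S1 (vertex_at S psi v0 p) /\
                f (vertex_at S psi v0 p) = vertex_at S psi v0 p.
  by apply: fixC; apply/mem_chamber_at; exists p.
have [x xv] := exists_vertex_point (apartment_sub HB AS Sv).
have := apt_value_vertex AS1 (cox_iso_comp fiso Hpsi) S1v xv; rewrite /= fv psiv E1.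
by have := apt_value_vertex AS Hpsi Sv xv; rewrite psiv E0 /side dotvBl /=; lra.
Qed.

Lemma chamber_at_sub (S : set {fset V}) (psi : V -> 'rV[R]_n) y i0 (E : {fset V}) :
  (i0 < size (verts y))%N -> vertex_at S psi v0 (verts y)`_i0 \in E ->
  (forall j, (j < size (verts y))%N -> j != i0 -> vertex_at S psi v0 (verts y)`_j \in E) ->
  chamber_at HB S psi v0 y `<=` E.
Proof.
move=> i0L i0E facetE; apply/fsubsetP => _ /mem_chamber_at [p p_y ->].
rewrite -(nth_index 0 p_y); have [->|pi0] := eqVneq (index p (verts y)) i0 => //.
by apply: facetE; rewrite ?index_mem.
Qed.

Hypothesis thickD : thick D.

Section PositiveDimension.
Hypothesis n_gt0 : (0 < n)%N.

Section ThirdChamber.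
Variables (S : set {fset V}) (psi : V -> 'rV[R]_n).
Hypotheses (AS : A S) (Hpsi : cox_iso H S psi).
Variables (y : 'rV[R]_n) (i0 : nat) (h : 'rV[R]_n * R) (E : {fset V}) (e : V).
Hypotheses (Gy : generic H y) (i0L : (i0 < size (verts y))%N).
Hypotheses (hy : wall_opposite HS y i0 h) (DE : chamber D E).
Hypothesis facetE :
  forall j, (j < size (verts y))%N -> j != i0 -> vertex_at S psi v0 (verts y)`_j \in E.
Hypotheses (EC : E != chamber_at HB S psi v0 y) (eE : e \in E).
Hypothesis e_facet :
  forall j, (j < size (verts y))%N -> j != i0 -> e != vertex_at S psi v0 (verts y)`_j.
Local Notation C := (chamber_at HB S psi v0 y).
Local Notation vtx := (vertex_at S psi v0).

(* f maps E to a chamber of S through the facet; it is not the chamber at y, as f is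
   injective and fixes that chamber, so it is the reflected one *)
Lemma third_chamber_image (S1 : set {fset V}) (f : V -> V) :
  A S1 -> S1 E -> cx_iso S1 S f -> (forall v, v \in C -> cvertex S1 v /\ f v = v) ->
  psi (f e) = reflect_in h (verts y)`_i0.
Proof.
move=> AS1 S1E fiso fixC.
have E_S1 (w : V) : w \in E -> cvertex S1 w := apartment_vertex HB AS1 S1E.
have psi_vtx j : (j < size (verts y))%N -> psi (vtx (verts y)`_j) = (verts y)`_j.
  by move=> jL; have [] := vertex_at_cell_verts Hpsi v0 (mem_nth 0 jL).
have [y' Gy' y'E] : exists2 y', generic H y' & forall v, v \in f @` E -> psi v \in verts y'.
  by apply: (apartment_simplex_chamber HB AS Hpsi); have [_ _ fs] := fiso; apply/(fs E E_S1).
have y'facet j : (j < size (verts y))%N -> j != i0 -> closedcell H y' (verts y)`_j.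
  move=> jL ji0; have [_ fv] := fixC _ (vertex_at_nth_chamber_at S psi v0 jL).
  have /mem_cell_verts [] : psi (f (vtx (verts y)`_j)) \in verts y'.
    by apply: y'E; apply/imfsetP; exists (vtx (verts y)`_j); rewrite ?facetE.
  by rewrite fv psi_vtx.
have fe_vtx j : (j < size (verts y))%N -> psi (f e) = (verts y)`_j -> e = vtx (verts y)`_j.
  move=> jL fej; have [S1v fv] := fixC _ (vertex_at_nth_chamber_at S psi v0 jL).
  have [f_inj _ _] := fiso; apply: f_inj (E_S1 e eE) S1v _.
  by rewrite fv -fej (vertex_at_psi HB AS Hpsi v0 (cx_iso_vertex fiso (E_S1 e eE))).
have fe_y' : psi (f e) \in verts y' by apply: y'E; apply/imfsetP; exists e.
have [same|refl] := chambers_through_facet HA n_gt0 Gy i0L hy Gy' y'facet.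
  have fe_y : psi (f e) \in verts y by rewrite -(eq_cell_verts HS same).
  set j := index (psi (f e)) (verts y) in fe_y.
  have jL : (j < size (verts y))%N by rewrite index_mem.
  have ej := fe_vtx j jL (esym (nth_index 0 fe_y)).
  have [ji0|ji0] := eqVneq j i0; last by move: (e_facet jL ji0); rewrite ej eqxx.
  have [_ maxC] := chamber_chamber_at HB v0 AS Hpsi Gy.
  exfalso; move/eqP: EC; apply; apply: maxC (proj1 DE) _.
  by apply: chamber_at_sub i0L _ facetE; rewrite -ji0 -ej.
have fe_y'' : psi (f e) \in verts (reflect_in h y) by rewrite -(eq_cell_verts HS refl).
apply/eqP; apply: contraT => fe_i0.
have [m [mL mi0 Lm]] := reflect_facet_verts HA Gy i0L hy fe_y'' fe_i0.
by move: (e_facet mL mi0); rewrite -(fe_vtx m mL (esym Lm)) eqxx.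
Qed.

Lemma third_chamber_value (xe : realisation R D) : sval xe = (fun w => (w == e)%:R) ->
  a xe = value AS Hpsi (reflect_in h (verts y)`_i0).
Proof.
move=> xe_e; have DC := chamber_chamber_at HB v0 AS Hpsi Gy.
have SC := apartment_chamber_at HB Hpsi v0 y.
have [S1 [AS1 S1C S1E]] := exists_apartment2 HB (proj1 DC) (proj1 DE).
have [f fiso ffix] := apartment_iso_fixing HB AS1 AS DC S1C SC.
have fixC v : v \in C -> cvertex S1 v /\ f v = v.
  move=> vC; have S1v := apartment_vertex HB AS1 S1C vC.
  by split; last apply: ffix S1v (apartment_vertex HB AS SC vC).
rewrite (apt_value_vertex AS1 (cox_iso_comp fiso Hpsi) (apartment_vertex HB AS1 S1E eE) xe_e).
by rewrite (apt_value_fixed_chamber AS AS1 Hpsi fiso Gy fixC) /= (third_chamber_image AS1 S1E).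
Qed.

End ThirdChamber.

Lemma exists_third_chamber (S : set {fset V}) (psi : V -> 'rV[R]_n) (AS : A S)
    (Hpsi : cox_iso H S psi) y i0 (C' : {fset V}) :
  generic H y -> (i0 < size (verts y))%N -> exists E e, [/\ chamber D E,
    forall j, (j < size (verts y))%N -> j != i0 -> vertex_at S psi v0 (verts y)`_j \in E,
    E != chamber_at HB S psi v0 y /\ E != C', e \in E &
    forall j, (j < size (verts y))%N -> j != i0 -> e != vertex_at S psi v0 (verts y)`_j].
Proof.
move=> Gy i0L; set vtx := vertex_at S psi v0; set C := chamber_at HB S psi v0 y.
have DC : chamber D C := chamber_chamber_at HB v0 AS Hpsi Gy.
set P := C `\ vtx (verts y)`_i0.
have facetP j : (j < size (verts y))%N -> j != i0 -> vtx (verts y)`_j \in P.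
  move=> jL ji0; rewrite in_fsetD1 vertex_at_nth_chamber_at // andbT.
  by apply: contra_neq ji0; apply: vertex_at_nth_inj.
have PC : P `<=` C by apply: fsubD1set.
have panelP : panel D P.
  split; first exact: (building_complex HB (proj1 DC) PC).
  exists C; split => //.
  by rewrite (cardfsD1 (vtx (verts y)`_i0) C) vertex_at_nth_chamber_at.
have [E [DE PE EC EC']] := thick_third_chamber C C' thickD panelP.
have [e eE eP] : exists2 e, e \in E & e \notin P.
  apply: contrapT => EP; have [_ maxE] := DE; move/eqP: EC; apply; symmetry.
  apply: maxE (proj1 DC) _; apply: fsubset_trans PC; apply/fsubsetP => w wE.
  by apply: contrapT => /negP wP; apply: EP; exists w.
exists E, e; split => // [j jL ji0|j jL ji0].
  by apply: (fsubsetP PE); apply: facetP.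
by apply: contraNneq eP => ->; apply: facetP.
Qed.

(* the third chamber E through the panel opposite the i0-th vertex has a vertex whose
   value is that of the reflection of this vertex, and, seen from the reflected chamber,
   that of the vertex itself *)
Lemma apt_value_reflect (S : set {fset V}) (psi : V -> 'rV[R]_n) (AS : A S)
    (Hpsi : cox_iso H S psi) y i0 h :
  generic H y -> (i0 < size (verts y))%N -> wall_opposite HS y i0 h ->
  value AS Hpsi (verts y)`_i0 = value AS Hpsi (reflect_in h (verts y)`_i0).
Proof.
move=> Gy i0L hy; have [Hh _ _] := hy; have hK := reflect_inK (wall_normal_neq0 HA Hh).
have [E [e [DE facetE [EC EC'] eE e_facet]]] :=
  exists_third_chamber AS Hpsi (chamber_at HB S psi v0 (reflect_in h y)) Gy i0L.
have [xe xe_e] : exists xe : realisation R D, sval xe = (fun w => (w == e)%:R).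
  by apply: exists_vertex_point; apply: (building_complex HB (proj1 DE)); rewrite fsub1set.
have [i1 [i1L L'i1 hy' facet']] := reflect_wall_opposite HA Gy i0L hy.
have facetE' j : (j < size (verts (reflect_in h y)))%N -> j != i1 ->
    vertex_at S psi v0 (verts (reflect_in h y))`_j \in E.
  by move=> jL ji1; have [m [mL mi0 <-]] := facet' j jL ji1; apply: facetE.
have e_facet' j : (j < size (verts (reflect_in h y)))%N -> j != i1 ->
    e != vertex_at S psi v0 (verts (reflect_in h y))`_j.
  by move=> jL ji1; have [m [mL mi0 <-]] := facet' j jL ji1; apply: e_facet.
rewrite -(third_chamber_value AS Hpsi Gy i0L hy DE facetE EC eE e_facet xe_e).
have := third_chamber_value AS Hpsi (generic_reflect_in HA Hh Gy) i1L hy' DE facetE' EC' eE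
  e_facet' xe_e.
by rewrite L'i1 hK.
Qed.

End PositiveDimension.

Lemma apt_value_const (S : set {fset V}) (psi : V -> 'rV[R]_n) (AS : A S)
    (Hpsi : cox_iso H S psi) z1 z2 :
  value AS Hpsi z1 = value AS Hpsi z2.
Proof.
have [c [g gE]] := apt_value_affine HB AS Hpsi v0 Haff.
suff g0 : g = 0 by rewrite !gE g0 !dotv0l.
have [n0|n_gt0] := posnP n.
  by apply/rowP => i; have := leq_trans (ltn_ord i) (eq_leq n0); rewrite ltn0.
have [y Gy _] := exists_generic_cell HA 0.
apply: (facet_walls_separate (HS := HS) HA Gy) => j jL.
have [h hy] := exists_wall_opposite HA n_gt0 Gy jL; have [Hh hj _] := hy.
exists h => //; rewrite /side (dotvC h.1 0) dotv0l.
have := apt_value_reflect n_gt0 AS Hpsi Gy jL hy.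
rewrite !gE /reflect_in dotvBr dotvZr (dotvC g h.1) => gh.
have /eqP : (2 * side h (verts y)`_j / dotv h.1 h.1) * dotv h.1 g = 0 by lra.
rewrite mulf_eq0 !mulf_eq0 invr_eq0 dotvv_eq0 (negbTE hj) (negbTE (wall_normal_neq0 HA Hh)).
by rewrite pnatr_eq0 /= => /eqP ->.
Qed.

End ThickBuilding.

Theorem mainTheorem8 (R : realType) (n : nat) (V : choiceType)
  (H : set ('rV[R]_n * R)) (D : set {fset V}) (A : set (set {fset V})) :
  euclidean_building H D A -> thick D ->
  forall a : realisation R D -> R, affine_functional H A a ->
  forall x y : realisation R D, a x = a y.
Proof.
move=> HB thickD a Haff x y.
have [sx [Dsx x0 _ x1]] := svalP x; have [sy [Dsy y0 _ _]] := svalP y.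
have [v0 _] : exists v0, v0 \in sx.
  by apply/fset0Pn; apply: contra_eq_neq x1 => ->; rewrite big_seq_fset0 eq_sym oner_eq0.
have [S [AS Ssx Ssy]] := exists_apartment2 HB Dsx Dsy.
have [_ _ [psi Hpsi]] := apartmentP HB AS.
rewrite (apt_value_located HB AS Hpsi v0 Haff (z := \sum_(v <- sx) sval x v *: psi v)).
  rewrite (apt_value_located HB AS Hpsi v0 Haff (z := \sum_(v <- sy) sval y v *: psi v)).
    exact: apt_value_const.
  by exists sy.
by exists sx.
Qed.
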